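(* Let $L$ be a Lie algebra over a field $K$ of characteristic different from $2$ and $3$. Define $u:Z^2_{comm}(L)\to ADer(L,L^* )$ by $(u(\varphi)(x))(y)=\varphi(x,y)$, and $v:ADer(L,L^* )\to C(L)$ by $v(d)(x,y)=d(x)(y)-d(y)(x)$, for $x,y\in L$. Then $u$ and $v$ are well-defined linear maps (i.e. $u(\varphi)$ is an antiderivation and $v(d)$ is a cyclic skew-symmetric form), and the sequence $$0\to Z^2_{comm}(L)\xrightarrow{u}ADer(L,L^* )\xrightarrow{v}C(L)$$ is exact, i.e. $u$ is injective and $\operatorname{Im}u=\operatorname{Ker}v$.
   Context: $Z^2_{comm}(L)$ is the space of commutative $2$-cocycles: symmetric bilinear forms $\varphi:L\times L\to K$ with $\varphi([x,y],z)+\varphi([z,x],y)+\varphi([y,z],x)=0$ for all $x,y,z\in L$. $L^*$ is the coadjoint module, with action $(x\bullet f)(y)=-f([x,y])$. For an $L$-module $M$, an antiderivation $d:L\to M$ is a linear map with $d([x,y])=y\bullet d(x)-x\bullet d(y)$ for all $x,y\in L$; $ADer(L,M)$ is the space of these. For $M=L^*$ this condition reads $d([x,y])(z)=d(x)([y,z])-d(y)([x,z])$ for all $x,y,z\in L$. A bilinear form $\psi$ on $L$ is cyclic if $\psi([x,y],z)=\psi([z,x],y)$ for all $x,y,z\in L$; $C(L)$ is the space of cyclic skew-symmetric bilinear forms on $L$. *)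

From HB Require Import structures.
From mathcomp Require Import all_boot all_order all_algebra.
Set Implicit Arguments. Unset Strict Implicit. Unset Printing Implicit Defensive.
Import GRing.Theory.
Local Open Scope ring_scope.

Section LieDefs.
Variables (K : fieldType) (L : lmodType K).

Definition is_lie_bracket (br : L -> L -> L) : Prop :=
  [/\ (forall a x y z, br (a *: x + y) z = a *: br x z + br y z),
      (forall a x y z, br x (a *: y + z) = a *: br x y + br x z),
      (forall x, br x x = 0) &
      (forall x y z, br x (br y z) + br y (br z x) + br z (br x y) = 0)].

Definition is_lin_functional (f : L -> K) : Prop :=
  forall a x y, f (a *: x + y) = a * f x + f y.

Definition is_bilinear_form (phi : L -> L -> K) : Prop :=
  (forall a x y z, phi (a *: x + y) z = a * phi x z + phi y z) /\
  (forall a x y z, phi x (a *: y + z) = a * phi x y + phi x z).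

Definition Z2comm (br : L -> L -> L) (phi : L -> L -> K) : Prop :=
  [/\ is_bilinear_form phi,
      (forall x y, phi x y = phi y x) &
      (forall x y z, phi (br x y) z + phi (br z x) y + phi (br y z) x = 0)].

Definition coad (br : L -> L -> L) (x : L) (f : L -> K) : L -> K :=
  fun y => - f (br x y).

Definition ADer (br : L -> L -> L) (d : L -> L -> K) : Prop :=
  [/\ (forall x, is_lin_functional (d x)),
      (forall a x y z, d (a *: x + y) z = a * d x z + d y z) &
      (forall x y z, d (br x y) z = coad br y (d x) z - coad br x (d y) z)].

Definition Ccyc (br : L -> L -> L) (psi : L -> L -> K) : Prop :=
  [/\ is_bilinear_form psi,
      (forall x y, psi x y = - psi y x) &
      (forall x y z, psi (br x y) z = psi (br z x) y)].

Definition u_map (phi : L -> L -> K) : L -> L -> K := fun x y => phi x y.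
Definition v_map (d : L -> L -> K) : L -> L -> K := fun x y => d x y - d y x.

End LieDefs.

(* Everything is a rearrangement of the defining identities: by antisymmetry of the
   bracket, the antiderivation rule for d : L -> L^* reads
   d([x,y])(z) = d(y)([x,z]) - d(x)([y,z]).  For a symmetric form this is exactly the
   commutative cocycle identity, and the skew part d(x)(y) - d(y)(x) of any
   antiderivation is cyclic.  No assumption on the characteristic is needed. *)
From mathcomp Require Import all_boot all_order all_algebra.
From mathcomp Require Import ring.
Import GRing.Theory.
Local Open Scope ring_scope.

Set Implicit Arguments.

Section LinearFunctional.
Variables (K : fieldType) (L : lmodType K) (f : L -> K).
Hypothesis f_lin : is_lin_functional f.

Lemma lin_functional0 : f 0 = 0.
Proof.
have := f_lin 1 0 0; rewrite scale1r mul1r addr0 => f0D.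
by apply: (addrI (f 0)); rewrite addr0 -f0D.
Qed.

Lemma lin_functionalN x : f (- x) = - f x.
Proof. by have := f_lin (-1) x 0; rewrite addr0 lin_functional0 addr0 scaleN1r mulN1r. Qed.

End LinearFunctional.

Section LieBracket.
Variables (K : fieldType) (L : lmodType K) (br : L -> L -> L).
Hypothesis br_lie : is_lie_bracket br.

Lemma lie_bracket_anticomm x y : br x y = - br y x.
Proof.
case: br_lie => brDl brDr br_alt _.
have br_addl a b c : br (a + b) c = br a c + br b c by have := brDl 1 a b c; rewrite !scale1r.
have br_addr a b c : br a (b + c) = br a b + br a c by have := brDr 1 a b c; rewrite !scale1r.
have := br_alt (x + y); rewrite br_addl !br_addr !br_alt add0r addr0 => /eqP.
by rewrite addr_eq0 => /eqP.
Qed.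

Lemma ADer_bracket d : ADer br d ->
  forall x y z, d (br x y) z = d y (br x z) - d x (br y z).
Proof. by case=> _ _ dbr x y z; rewrite dbr /coad opprK; ring. Qed.

Lemma Z2comm_ADer phi : Z2comm br phi -> ADer br (u_map phi).
Proof.
case=> [[phiDl phiDr] phi_sym phi_cocycle]; split=> //; first by move=> x a y z; exact: phiDr.
move=> x y z; rewrite /coad /u_map opprK.
rewrite (phi_sym y) (phi_sym x) (lie_bracket_anticomm x z).
rewrite (lin_functionalN (fun a u v => phiDl a u v y)).
by apply/eqP; rewrite -subr_eq0 -(phi_cocycle x y z); apply/eqP; ring.
Qed.

Lemma ADer_skew_Ccyc d : ADer br d -> Ccyc br (v_map d).
Proof.
move=> dADer; case: (dADer) => d_lin dDl _; split.
- by split=> a x y z; rewrite /v_map dDl d_lin; ring.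
- by move=> x y; rewrite /v_map opprB.
- move=> x y z; rewrite /v_map !ADer_bracket //.
  rewrite (lie_bracket_anticomm z x) (lie_bracket_anticomm z y).
  rewrite !(lin_functionalN (d_lin _)); ring.
Qed.

Lemma Z2comm_skew_eq0 phi : Z2comm br phi -> forall x y, v_map (u_map phi) x y = 0.
Proof. by case=> _ phi_sym _ x y; rewrite /v_map /u_map phi_sym subrr. Qed.

Lemma ADer_sym_Z2comm d : ADer br d -> (forall x y, d x y = d y x) -> Z2comm br d.
Proof.
move=> dADer d_sym; case: (dADer) => d_lin dDl _.
have dbr := ADer_bracket dADer.
have cyc x y z : d x (br y z) = d y (br x z) - d z (br x y).
  rewrite d_sym dbr (lie_bracket_anticomm y x) (lie_bracket_anticomm z x).
  rewrite !(lin_functionalN (d_lin _)); ring.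
split=> //; first by split=> a x y z; rewrite ?dDl ?d_lin.
move=> x y z; rewrite !dbr (lie_bracket_anticomm z y) (lie_bracket_anticomm z x).
rewrite (lie_bracket_anticomm y x) !(lin_functionalN (d_lin _)) (cyc x y z); ring.
Qed.

End LieBracket.

Theorem proposition1p3 (K : fieldType) (L : lmodType K) (br : L -> L -> L) :
  (2 \notin [pchar K])%N -> (3 \notin [pchar K])%N ->
  is_lie_bracket br ->
  (  (* u is well defined and linear *)
      (forall phi, Z2comm br phi -> ADer br (u_map phi)) /\
      (forall (a : K) (phi1 phi2 : L -> L -> K) (x y : L),
          u_map (fun s t => a * phi1 s t + phi2 s t) x y
          = a * u_map phi1 x y + u_map phi2 x y) /\
      (* v is well defined and linear *)
      (forall d, ADer br d -> Ccyc br (v_map d)) /\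
      (forall (a : K) (d1 d2 : L -> L -> K) (x y : L),
          v_map (fun s t => a * d1 s t + d2 s t) x y
          = a * v_map d1 x y + v_map d2 x y) /\
      (* u is injective *)
      (forall phi1 phi2, Z2comm br phi1 -> Z2comm br phi2 ->
          (forall x y, u_map phi1 x y = u_map phi2 x y) ->
          forall x y, phi1 x y = phi2 x y) /\
      (* Im u is contained in Ker v *)
      (forall phi, Z2comm br phi -> forall x y, v_map (u_map phi) x y = 0) /\
      (* Ker v is contained in Im u *)
      (forall d, ADer br d -> (forall x y, v_map d x y = 0) ->
          exists phi, Z2comm br phi /\ forall x y, u_map phi x y = d x y)).
Proof.
move=> _ _ br_lie.
split; first exact: Z2comm_ADer.
split; first by [].
split; first exact: ADer_skew_Ccyc.
split; first by move=> *; rewrite /v_map; ring.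
split; first by move=> phi1 phi2 _ _ u_eq; exact: u_eq.
split; first exact: Z2comm_skew_eq0.
move=> d dADer v_d0; exists d; split=> //.
apply: ADer_sym_Z2comm => // x y.
by apply/eqP; rewrite -subr_eq0 -(v_d0 x y).
Qed.
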